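(* Let $L$ be a proposal kernel on $\Omega$ and let $\alpha,\tilde\alpha:\Omega\times\Omega\to[0,1]$ be acceptance functions; let $K$, $\tilde K$ be the associated Metropolis-Hastings-type kernels, i.e. from $x$ propose $z\sim L(x,\cdot)$ and move to $z$ with probability $\alpha(x,z)$ (resp. $\tilde\alpha(x,z)$), otherwise stay at $x$. Let $V:\Omega\to[0,\infty)$ and assume a chain $\{Z_t\}$ driven by $K$ satisfies $\mathbb{E}[V(Z_{t+1})\mid Z_t]\le(1-a)V(Z_t)+b$ for constants $a,b$. Assume also that for some $\delta>0$ and some function $f:\Omega\times\Omega\to[0,\infty)$, $$\sup_{x\in\Omega}\|K(x,\cdot)-\tilde K(x,\cdot)\|_{\mathrm{TV}}\le\delta,\qquad |\alpha(x,y)-\tilde\alpha(x,y)|\le\delta f(x,y)\le\delta\ \text{ for all } x,y,$$ and $$\int_y f(x,y)V(y)\,L(x,dy)\le V(x)\quad\text{for all }x.$$ Then a chain $\{X_t\}$ evolving according to $\tilde K$ satisfies $$\mathbb{E}[V(X_{t+1})\mid X_t=x]\le(1-a+2\delta)V(x)+b.$$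
   Context: $\|\mu-\nu\|_{\mathrm{TV}}=\sup_A|\mu(A)-\nu(A)|$. *)

From HB Require Import structures.
From mathcomp Require Import all_boot all_order all_algebra.
From mathcomp Require Import all_classical all_reals all_analysis.
Set Implicit Arguments. Unset Strict Implicit. Unset Printing Implicit Defensive.
Import Order.TTheory GRing.Theory Num.Theory.
Local Open Scope classical_set_scope.
Local Open Scope ring_scope.
Local Open Scope ereal_scope.

(* MH_expect L alpha x g = \int g dK(x,.) =
     \int alpha(x,z) g(z) L(x,dz) + (1 - \int alpha(x,z) L(x,dz)) g(x). *)
Definition MH_expect d (T : measurableType d) (R : realType)
  (L : T -> probability T R) (alpha : T -> T -> R) (x : T) (g : T -> R)
  : \bar R :=
  \int[L x]_z (alpha x z * g z)%:E
  + (1 - \int[L x]_z (alpha x z)%:E) * (g x)%:E.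

Definition MH_kernel d (T : measurableType d) (R : realType)
  (L : T -> probability T R) (alpha : T -> T -> R) (x : T) (A : set T)
  : \bar R := MH_expect L alpha x (\1_A).

Definition MH_tv d (T : measurableType d) (R : realType)
  (L : T -> probability T R) (alpha alpha' : T -> T -> R) (x : T) : \bar R :=
  ereal_sup [set `|MH_kernel L alpha x A - MH_kernel L alpha' x A|
             | A in [set A | measurable A]].

From HB Require Import structures.
From mathcomp Require Import all_boot all_order all_algebra.
From mathcomp Require Import all_classical all_reals all_analysis.
From mathcomp Require Import measurable_realfun lra.
Set Implicit Arguments. Unset Strict Implicit. Unset Printing Implicit Defensive.
Import Order.TTheory GRing.Theory Num.Theory.
Local Open Scope classical_set_scope.
Local Open Scope ring_scope.

(* Pointwise
   [alpha' V <= alpha V + delta f V], so integrating against [L x] and using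
   [\int f V dL <= V x] raises the first term by at most [delta V x]; and
   [alpha <= alpha' + delta] bounds the rejection mass [1 - \int alpha' dL] by
   [1 - \int alpha dL + delta], which costs another [delta V x]. *)

Section integral_comparison.
Context d (T : measurableType d) (R : realType) (mu : {measure set T -> \bar R}).
Variables (g h k : T -> R) (c : R).
Hypotheses (mg : measurable_fun setT g) (mh : measurable_fun setT h)
  (mk : measurable_fun setT k).
Hypotheses (g0 : forall z, 0 <= g z) (h0 : forall z, 0 <= h z)
  (k0 : forall z, 0 <= k z) (c0 : 0 <= c).

Lemma ge0_le_integralDZ : (forall z, g z <= h z + c * k z) ->
  (\int[mu]_z (g z)%:E <= \int[mu]_z (h z)%:E + c%:E * \int[mu]_z (k z)%:E)%E.
Proof.
move=> gle.
have mE (u : T -> R) : measurable_fun setT u ->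
    measurable_fun setT (fun z => (u z)%:E) by move=> mu0; exact/measurable_EFinP.
have mEck : measurable_fun setT (fun z => c%:E * (k z)%:E)%E.
  by apply: emeasurable_funM; [exact: measurable_cst | exact: mE].
have intDZ : (\int[mu]_z ((h z)%:E + c%:E * (k z)%:E)
    = \int[mu]_z (h z)%:E + c%:E * \int[mu]_z (k z)%:E)%E.
  rewrite ge0_integralD//; last 3 first.
  - by move=> z _; rewrite lee_fin.
  - exact: mE.
  - by move=> z _; rewrite lee_fin mulr_ge0.
  rewrite ge0_integralZl//; first exact: mE.
  by move=> z _; rewrite lee_fin.
rewrite -intDZ; apply: ge0_le_integral => //.
- by move=> z _; rewrite lee_fin.
- exact: mE.
- exact: emeasurable_funD (mE _ mh) mEck.
- by move=> z _; rewrite -EFinM -EFinD lee_fin.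
Qed.

End integral_comparison.

Section probability_unit_integral.
Context d (T : measurableType d) (R : realType) (P : probability T R).

Lemma integral_probability1 : (\int[P]_z 1 = 1)%E.
Proof.
by rewrite -[fun _ => _]/(cst 1%E) integral_cst// mul1e; exact: probability_setT.
Qed.

Variable g : T -> R.
Hypotheses (mg : measurable_fun setT g) (g01 : forall z, 0 <= g z <= 1).

Lemma integral_unit_ge0 : (0 <= \int[P]_z (g z)%:E)%E.
Proof. by apply: integral_ge0 => z _; rewrite lee_fin; case/andP: (g01 z). Qed.

Lemma integral_unit_le1 : (\int[P]_z (g z)%:E <= 1)%E.
Proof.
rewrite -integral_probability1.
apply: ge0_le_integral => //.
- by move=> z _; rewrite lee_fin; case/andP: (g01 z).
- exact/measurable_EFinP.
- by move=> z _; rewrite lee_fin; case/andP: (g01 z).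
Qed.

Lemma integral_unit_fin_num : (\int[P]_z (g z)%:E)%E \is a fin_num.
Proof.
rewrite ge0_fin_numE; last exact: integral_unit_ge0.
exact: le_lt_trans integral_unit_le1 (ltry 1).
Qed.

End probability_unit_integral.

Section MH_expect_real.
Context d (T : measurableType d) (R : realType) (L : T -> probability T R).
Variables (alpha : T -> T -> R) (g : T -> R) (x : T).
Hypotheses (malpha : measurable_fun setT (alpha x))
  (alpha01 : forall z, 0 <= alpha x z <= 1).

Let accept := (\int[L x]_z (alpha x z)%:E)%E.
Let move_g := (\int[L x]_z (alpha x z * g z)%:E)%E.

Lemma MH_expectE : move_g \is a fin_num ->
  MH_expect L alpha x g = (fine move_g + (1 - fine accept) * g x)%:E.
Proof.
rewrite /move_g /accept => mfin.
by rewrite /MH_expect -(fineK mfin) -(fineK (integral_unit_fin_num (L x) malpha alpha01))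
  -EFinB -EFinM -EFinD.
Qed.

Lemma MH_expect_fin_num_move (r : R) : (forall z, 0 <= g z) ->
  (MH_expect L alpha x g <= r%:E)%E -> move_g \is a fin_num.
Proof.
move=> g0; rewrite /MH_expect -(fineK (integral_unit_fin_num (L x) malpha alpha01)).
rewrite -EFinB -EFinM -/accept -/move_g => Kle.
have m0 : (0 <= move_g)%E.
  by apply: integral_ge0 => z _; rewrite lee_fin mulr_ge0//; case/andP: (alpha01 z).
rewrite ge0_fin_numE// (@le_lt_trans _ _ (r - (1 - fine accept) * g x)%:E) ?ltry//.
by rewrite EFinB leeBrDr.
Qed.

End MH_expect_real.

Section MH_perturbation.
Context d (T : measurableType d) (R : realType) (L : T -> probability T R).
Variables (alpha alpha' : T -> T -> R) (V : T -> R) (f : T -> T -> R).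
Variables (delta : R) (x : T).
Hypotheses (malpha : measurable_fun setT (alpha x))
  (malpha' : measurable_fun setT (alpha' x))
  (alpha01 : forall z, 0 <= alpha x z <= 1) (alpha'01 : forall z, 0 <= alpha' x z <= 1).
Hypotheses (mV : measurable_fun setT V) (V0 : forall z, 0 <= V z)
  (mf : measurable_fun setT (f x)) (f0 : forall z, 0 <= f x z).
Hypotheses (delta0 : 0 <= delta)
  (alpha_dist : forall z, `|alpha x z - alpha' x z| <= delta * f x z <= delta)
  (fV_le : (\int[L x]_z (f x z * V z)%:E <= (V x)%:E)%E).

Lemma integral_accept_le :
  (\int[L x]_z (alpha x z)%:E <= \int[L x]_z (alpha' x z)%:E + delta%:E)%E.
Proof.
have alpha_le z : alpha x z <= alpha' x z + delta * 1.
  by have /andP[+ fle] := alpha_dist z => /ler_normlW; lra.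
rewrite -[X in (_ + X)%E]mule1 -(integral_probability1 (L x)).
apply: ge0_le_integralDZ (measurable_cst (1 : R)) _ _ _ _ alpha_le => //.
- by move=> z; case/andP: (alpha01 z).
- by move=> z; case/andP: (alpha'01 z).
Qed.

Lemma integral_acceptV_le : (\int[L x]_z (alpha' x z * V z)%:E
    <= \int[L x]_z (alpha x z * V z)%:E + (delta * V x)%:E)%E.
Proof.
have alpha'V_le z : alpha' x z * V z <= alpha x z * V z + delta * (f x z * V z).
  have /andP[+ _] := alpha_dist z; rewrite distrC => /ler_normlW.
  by have := V0 z; nra.
have prod_ge0 (u : T -> R) : (forall z, 0 <= u z <= 1) -> forall z, 0 <= u z * V z.
  by move=> u01 z; rewrite mulr_ge0//; case/andP: (u01 z).
apply: (le_trans (ge0_le_integralDZ (L x) (measurable_funM malpha' mV)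
  (measurable_funM malpha mV) (measurable_funM mf mV) (prod_ge0 _ alpha'01)
  (prod_ge0 _ alpha01) (fun z => mulr_ge0 (f0 z) (V0 z)) delta0 alpha'V_le)).
by rewrite EFinM; apply: leeD => //; apply: lee_wpmul2l; rewrite ?lee_fin.
Qed.

Lemma MH_expect_perturb_le : (\int[L x]_z (alpha x z * V z)%:E)%E \is a fin_num ->
  (MH_expect L alpha' x V <= MH_expect L alpha x V + (2 * delta * V x)%:E)%E.
Proof.
move=> AVfin; have A'V_le := integral_acceptV_le.
have A'Vfin : (\int[L x]_z (alpha' x z * V z)%:E)%E \is a fin_num.
  rewrite ge0_fin_numE; last first.
    by apply: integral_ge0 => z _; rewrite lee_fin mulr_ge0//; case/andP: (alpha'01 z).
  by rewrite (le_lt_trans A'V_le)// -(fineK AVfin) -EFinD ltry.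
have B_le := integral_accept_le.
have Bfin := integral_unit_fin_num (L x) malpha alpha01.
have B'fin := integral_unit_fin_num (L x) malpha' alpha'01.
move: A'V_le B_le; rewrite -(fineK AVfin) -(fineK A'Vfin) -(fineK Bfin) -(fineK B'fin).
rewrite -!EFinD !lee_fin => A'V_le B_le.
rewrite (MH_expectE malpha alpha01 AVfin) (MH_expectE malpha' alpha'01 A'Vfin).
rewrite -EFinD lee_fin.
set p := fine (\int[L x]_z (alpha x z)%:E) in B_le *.
set p' := fine (\int[L x]_z (alpha' x z)%:E) in B_le *.
have rejection_gap : 0 <= (p' + delta - p) * V x by rewrite mulr_ge0// subr_ge0.
lra.
Qed.

End MH_perturbation.

Theorem mainTheorem5 (d : measure_display) (T : measurableType d)
  (R : realType) (L : T -> probability T R)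
  (alpha alpha' : T -> T -> R) (V : T -> R) (f : T -> T -> R)
  (a b delta : R) :
  (forall x, measurable_fun setT (alpha x)) ->
  (forall x, measurable_fun setT (alpha' x)) ->
  (forall x y, 0 <= alpha x y <= 1) ->
  (forall x y, 0 <= alpha' x y <= 1) ->
  measurable_fun setT V ->
  (forall x, 0 <= V x) ->
  (forall x, measurable_fun setT (f x)) ->
  (forall x y, 0 <= f x y) ->
  (forall x, (MH_expect L alpha x V <= ((1 - a) * V x + b)%:E)%E) ->
  0 < delta ->
  (forall x, (MH_tv L alpha alpha' x <= delta%:E)%E) ->
  (forall x y, `|alpha x y - alpha' x y| <= delta * f x y <= delta) ->
  (forall x, (\int[L x]_y (f x y * V y)%:E <= (V x)%:E)%E) ->
  forall x, (MH_expect L alpha' x V <= ((1 - a + 2 * delta) * V x + b)%:E)%E.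
Proof.
move=> ma ma' ha ha' mV V0 mf f0 hK delta0 _ hd hfV x.
have AVfin := MH_expect_fin_num_move (ma x) (ha x) V0 (hK x).
apply: (le_trans (MH_expect_perturb_le (ma x) (ma' x) (ha x) (ha' x) mV V0 (mf x)
  (f0 x) (ltW delta0) (hd x) (hfV x) AVfin)).
apply: (le_trans (leeD (hK x) (lexx _))).
by rewrite -EFinD lee_fin; lra.
Qed.
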